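(* Let $X$, $Y$ be bigraphs and $f,g:X\to Y$ bigraph homomorphisms. The following are equivalent: (1) $f$ and $g$ are $\times$-homotopic; (2) there is a $\times$-homotopy from $f$ to $g$; (3) $f$ and $g$ belong to the same connected component of the maximal reflexive subgraph of $Y^X$.
   Context: A graph is a set $V$ with a symmetric relation $E\subset V\times V$ (loops allowed); it is reflexive if every vertex has a loop, and the maximal reflexive subgraph is the induced subgraph on looped vertices. $K_2$ has vertices $0,1$ and edges $(0,1),(1,0)$. A bigraph is a graph $X$ with a graph homomorphism $\varepsilon_X:X\to K_2$; $V_i(X)=\varepsilon_X^{-1}(i)$; bigraph homomorphisms commute with colorings. A 2-colored multi-homomorphism $\eta$ from $X$ to $Y$ assigns to each $v\in V(X)$ a finite nonempty $\eta(v)\subset V_i(Y)$ for $v\in V_i(X)$, with $\eta(v)\times\eta(w)\subset E(Y)$ whenever $(v,w)\in E(X)$; $\mathrm{Hom}_{/K_2}(X,Y)$ is the poset of these ordered by pointwise inclusion, and a homomorphism $f$ is identified with $v\mapsto\{f(v)\}$. $f,g$ are $\times$-homotopic if they lie in the same connected component of $\mathrm{Hom}_{/K_2}(X,Y)$. For $n\ge0$, $I_n$ is the graph with vertices $0,\dots,n$ and edges $(a,b)$ with $|a-b|\le1$; $X\times I_n$ is the categorical product (edges $((a,s),(a',s'))$ with $(a,a')\in E(X)$, $(s,s')\in E(I_n)$), colored via the first coordinate. A $\times$-homotopy from $f$ to $g$ is a bigraph homomorphism $F:X\times I_n\to Y$ for some $n\ge0$ with $F(a,0)=f(a)$ and $F(a,n)=g(a)$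 for all $a$. $Y^X$ is the graph whose vertices are maps $h:V(X)\to V(Y)$ with $\varepsilon_Y\circ h=\varepsilon_X$, with $h,h'$ adjacent iff $(h(a),h'(a'))\in E(Y)$ for all $(a,a')\in E(X)$. *)

From Stdlib Require Import List Relations.
Unset Implicit Arguments.

Record graph := Graph {
  V : Type;
  E : V -> V -> Prop;
  E_sym : forall x y, E x y -> E y x }.

Definition graph_hom (X Y : graph) (f : V X -> V Y) : Prop :=
  forall a b, E X a b -> E Y (f a) (f b).

(* K_2: vertices 0 (false), 1 (true); edges (0,1),(1,0). *)
Definition K2_E (a b : bool) : Prop := (a = false /\ b = true) \/ (a = true /\ b = false).
Lemma K2_E_sym a b : K2_E a b -> K2_E b a.
Proof. unfold K2_E; intuition. Qed.
Definition K2 : graph := @Graph bool K2_E K2_E_sym.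

Record bigraph := Bigraph {
  bg :> graph;
  eps : V bg -> bool;
  eps_hom : graph_hom bg K2 eps }.

Definition bigraph_hom (X Y : bigraph) (f : V X -> V Y) : Prop :=
  graph_hom X Y f /\ forall a, eps Y (f a) = eps X a.

(* 2-colored multi-homomorphisms: eta v is a finite nonempty subset of V_i(Y)
   for v in V_i(X), and eta v x eta w subset of E(Y) for (v,w) in E(X). *)
Definition finite_set (T : Type) (A : T -> Prop) : Prop :=
  exists l : list T, forall x, A x -> In x l.

Definition is_multihom (X Y : bigraph) (eta : V X -> V Y -> Prop) : Prop :=
  (forall v, finite_set (V Y) (eta v)) /\
  (forall v, exists y, eta v y) /\
  (forall v y, eta v y -> eps Y y = eps X v) /\
  (forall v w, E X v w -> forall y z, eta v y -> eta w z -> E Y y z).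

Definition Hom_K2 (X Y : bigraph) := { eta : V X -> V Y -> Prop | is_multihom X Y eta }.

Definition Hom_le (X Y : bigraph) (a b : Hom_K2 X Y) : Prop :=
  forall v y, proj1_sig a v y -> proj1_sig b v y.

Definition Hom_connected (X Y : bigraph) : Hom_K2 X Y -> Hom_K2 X Y -> Prop :=
  clos_refl_sym_trans _ (@Hom_le X Y).

(* a homomorphism f is identified with v |-> {f v} *)
Definition singleton_mh (X Y : bigraph) (f : V X -> V Y) : V X -> V Y -> Prop :=
  fun v y => y = f v.

Definition x_homotopic (X Y : bigraph) (f g : V X -> V Y) : Prop :=
  exists (pf : is_multihom X Y (@singleton_mh X Y f))
         (pg : is_multihom X Y (@singleton_mh X Y g)),
    Hom_connected X Y (exist _ _ pf) (exist _ _ pg).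

Definition In_V (n : nat) := { s : nat | s <= n }.
Definition In_E (n : nat) (s t : In_V n) : Prop :=
  proj1_sig s <= S (proj1_sig t) /\ proj1_sig t <= S (proj1_sig s).
Lemma In_E_sym n (s t : In_V n) : In_E n s t -> In_E n t s.
Proof. unfold In_E; intuition. Qed.
Definition I_ (n : nat) : graph := @Graph (In_V n) (In_E n) (In_E_sym n).

Definition prod_E (G H : graph) (p q : V G * V H) : Prop :=
  E G (fst p) (fst q) /\ E H (snd p) (snd q).
Lemma prod_E_sym (G H : graph) (p q : V G * V H) : prod_E G H p q -> prod_E G H q p.
Proof. unfold prod_E; intros [h1 h2]; split; apply E_sym; assumption. Qed.
Definition prod_graph (G H : graph) : graph := @Graph (V G * V H) (prod_E G H) (prod_E_sym G H).

Definition XxI_eps (X : bigraph) (n : nat) (p : V X * In_V n) : bool := eps X (fst p).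
Lemma XxI_eps_hom (X : bigraph) (n : nat) :
  graph_hom (prod_graph X (I_ n)) K2 (XxI_eps X n).
Proof. intros p q [h _]. exact (eps_hom X _ _ h). Qed.
Arguments XxI_eps_hom : clear implicits.
Definition XxI (X : bigraph) (n : nat) : bigraph := @Bigraph (prod_graph X (I_ n)) (XxI_eps X n) (XxI_eps_hom X n).

Definition In_0 (n : nat) : In_V n := exist _ 0 (le_0_n n).
Definition In_top (n : nat) : In_V n := exist _ n (le_n n).

Definition x_homotopy (X Y : bigraph) (f g : V X -> V Y) (n : nat)
    (F : V X * In_V n -> V Y) : Prop :=
  bigraph_hom (XxI X n) Y F /\
  (forall a, F (a, In_0 n) = f a) /\ (forall a, F (a, In_top n) = g a).

Definition exp_V (X Y : bigraph) := { h : V X -> V Y | forall a, eps Y (h a) = eps X a }.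
Definition exp_E (X Y : bigraph) (h h' : exp_V X Y) : Prop :=
  forall a a', E X a a' -> E Y (proj1_sig h a) (proj1_sig h' a').
Lemma exp_E_sym (X Y : bigraph) (h h' : exp_V X Y) : exp_E X Y h h' -> exp_E X Y h' h.
Proof. intros H a a' e. apply E_sym. apply H. apply E_sym. exact e. Qed.
Definition exp_graph (X Y : bigraph) : graph := @Graph (exp_V X Y) (exp_E X Y) (exp_E_sym X Y).

Definition refl_V (G : graph) := { x : V G | E G x x }.
Definition refl_E (G : graph) (x y : refl_V G) : Prop := E G (proj1_sig x) (proj1_sig y).
Lemma refl_E_sym (G : graph) (x y : refl_V G) : refl_E G x y -> refl_E G y x.
Proof. unfold refl_E; apply E_sym. Qed.
Definition max_refl_subgraph (G : graph) : graph := @Graph (refl_V G) (refl_E G) (refl_E_sym G).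

Definition same_component (G : graph) : V G -> V G -> Prop :=
  clos_refl_sym_trans _ (E G).

From Stdlib Require Import List Relations.
From Stdlib Require Import Arith Lia IndefiniteDescription.

Set Implicit Arguments.

(* All three relations coincide with the equivalence relation generated by
   adjacency in Y^X on the looped maps, i.e. on the bigraph homomorphisms.
   Currying turns a x-homotopy X * I_n -> Y into a walk of length n through
   looped vertices of Y^X.  Any two selections of a 2-colored
   multi-homomorphism are adjacent in Y^X, so a step eta <= eta' of
   Hom_{/K2}(X,Y) becomes an adjacency between chosen selections; conversely
   two adjacent maps lie below their pointwise union, which is again a
   multi-homomorphism. *)

Section ClosureTransport.

Variables (A B : Type) (R : relation A) (S : relation B).

Lemma clos_rst_map (h : A -> B) :
  (forall x y, R x y -> S (h x) (h y)) ->
  forall x y, clos_refl_sym_trans A R x y -> clos_refl_sym_trans B S (h x) (h y).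
Proof.
  intros HS x y Hxy; induction Hxy.
  - apply rst_step, HS; assumption.
  - apply rst_refl.
  - apply rst_sym; assumption.
  - eapply rst_trans; eassumption.
Qed.

Lemma clos_rst_lift (P : A -> Prop) (h : forall x, P x -> B) :
  (forall x y, R x y -> P x /\ P y) ->
  (forall x, P x -> R x x) ->
  (forall x y hx hy, R x y -> clos_refl_sym_trans B S (h x hx) (h y hy)) ->
  forall x y, clos_refl_sym_trans A R x y ->
  forall hx hy, clos_refl_sym_trans B S (h x hx) (h y hy).
Proof.
  intros HP Hrefl HS x y Hxy; apply clos_rst_rst1n in Hxy.
  induction Hxy as [x | x y z [Rxy | Ryx] _ IH]; intros hx hz.
  - apply HS, Hrefl; exact hx.
  - destruct (HP _ _ Rxy) as [_ hy].
    apply rst_trans with (h y hy); [apply HS; exact Rxy | apply IH].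
  - destruct (HP _ _ Ryx) as [hy _].
    apply rst_trans with (h y hy); [apply rst_sym, HS; exact Ryx | apply IH].
Qed.

End ClosureTransport.

Arguments clos_rst_map {A B R S h} _ {x y}.
Arguments clos_rst_lift {A B R S P} h _ _ _ {x y}.

Section LoopedMaps.

Context {X Y : bigraph}.

Definition colored (h : V X -> V Y) : Prop := forall a, eps Y (h a) = eps X a.

Definition adjacent (h h' : V X -> V Y) : Prop :=
  forall a a', E X a a' -> E Y (h a) (h' a').

Definition looped (h : V X -> V Y) : Prop := colored h /\ adjacent h h.

Definition loop_edge (h h' : V X -> V Y) : Prop := looped h /\ looped h' /\ adjacent h h'.

Definition connected : relation (V X -> V Y) := clos_refl_sym_trans _ loop_edge.

Lemma looped_of_bigraph_hom f : bigraph_hom X Y f -> looped f.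
Proof. intros [Hadj Hcol]; split; assumption. Qed.

Lemma adjacent_sym h h' : adjacent h h' -> adjacent h' h.
Proof. intros Hadj a a' e; apply E_sym, Hadj, E_sym; exact e. Qed.

Lemma loop_edge_sym h h' : loop_edge h h' -> loop_edge h' h.
Proof. intros (Hh & Hh' & Hadj); split; [exact Hh' | split; [exact Hh | apply adjacent_sym, Hadj]]. Qed.

Lemma loop_edge_looped h h' : loop_edge h h' -> looped h /\ looped h'.
Proof. intros (Hh & Hh' & _); split; assumption. Qed.

Lemma loop_edge_refl h : looped h -> loop_edge h h.
Proof. intros Hh; repeat split; apply Hh. Qed.

Lemma loop_edge_ext f h : looped h -> (forall a, f a = h a) -> loop_edge f h.
Proof.
  intros [Hcol Hadj] Hfh; repeat split; try assumption; intros a; rewrite Hfh.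
  - apply Hcol.
  - intros a' e; rewrite Hfh; apply Hadj; exact e.
  - intros a' e; apply Hadj; exact e.
Qed.

Definition walk (n : nat) (H : nat -> V X -> V Y) : Prop :=
  (forall s, s <= n -> looped (H s)) /\ (forall s, s < n -> adjacent (H s) (H (S s))).

Lemma walk_connected n H : walk n H -> connected (H 0) (H n).
Proof.
  intros [Hlooped Hadj].
  assert (Hk : forall k, k <= n -> connected (H 0) (H k)).
  { induction k as [|k IH]; intros hk; [apply rst_refl|].
    apply rst_trans with (H k); [apply IH; lia|].
    apply rst_step; repeat split; try apply Hlooped; try apply Hadj; lia. }
  apply Hk; lia.
Qed.

Lemma walk_cons x n H :
  looped x -> adjacent x (H 0) -> walk n H ->
  walk (S n) (fun s => match s with 0 => x | S s => H s end).
Proof.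
  intros Hx Hx0 [Hlooped Hadj]; split.
  - intros [|s] hs; [exact Hx | apply Hlooped; lia].
  - intros [|s] hs; [exact Hx0 | apply Hadj; lia].
Qed.

Lemma connected_walk x z :
  connected x z -> looped z -> exists n H, walk n H /\ H 0 = x /\ H n = z.
Proof.
  intros Hxz; apply clos_rst_rst1n in Hxz.
  induction Hxz as [x | x y z Hxy _ IH]; intros Hz.
  - exists 0, (fun _ => x); split; [split | split; reflexivity].
    + intros s _; exact Hz.
    + intros s hs; lia.
  - assert (Hxy' : loop_edge x y) by (destruct Hxy; [|apply loop_edge_sym]; assumption).
    destruct Hxy' as (Hx & _ & Hadj).
    destruct (IH Hz) as (n & H & HW & <- & <-).
    exists (S n), (fun s => match s with 0 => x | S s => H s end).
    split; [apply walk_cons; assumption | split; reflexivity].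
Qed.

Lemma walk_x_homotopy n H :
  walk n H -> x_homotopy X Y (H 0) (H n) n (fun p => H (proj1_sig (snd p)) (fst p)).
Proof.
  intros [Hlooped Hadj]; repeat split.
  - intros [a [s hs]] [a' [t ht]] [e Hst]; simpl in *; unfold In_E in Hst; simpl in Hst.
    assert (s = t \/ t = S s \/ s = S t) as [<- | [-> | ->]] by lia.
    + apply Hlooped; assumption.
    + apply Hadj; [lia | exact e].
    + apply adjacent_sym; [apply Hadj; lia | exact e].
  - intros [a [s hs]]; apply Hlooped; exact hs.
Qed.

(* Clamping the time coordinate turns the slices of a homotopy into a total
   sequence of maps, with no bound proofs to carry around. *)
Definition clamp (n s : nat) : In_V n := exist _ (Nat.min s n) (Nat.le_min_r s n).

Lemma In_V_ext n (s t : In_V n) : proj1_sig s = proj1_sig t -> s = t.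
Proof. destruct s as [s hs], t as [t ht]; simpl; intros <-; f_equal; apply le_unique. Qed.

Lemma clamp_adjacent n s t : s <= S t -> t <= S s -> E (I_ n) (clamp n s) (clamp n t).
Proof. intros; unfold clamp; cbn; unfold In_E; cbn [proj1_sig]; lia. Qed.

Lemma x_homotopy_walk f g n F :
  x_homotopy X Y f g n F -> walk n (fun s a => F (a, clamp n s)).
Proof.
  intros [[Fhom Fcol] _]; split; intros s _; [split|].
  - intros a; apply Fcol.
  - intros a a' e; apply Fhom; split; [exact e | apply clamp_adjacent; lia].
  - intros a a' e; apply Fhom; split; [exact e | apply clamp_adjacent; lia].
Qed.

Lemma x_homotopy_connected f g n F : x_homotopy X Y f g n F -> connected f g.
Proof.
  intros HF; pose proof (x_homotopy_walk HF) as HW; pose proof (proj1 HW) as Hlooped.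
  destruct HF as [_ [F0 Fn]].
  apply rst_trans with (fun a => F (a, clamp n 0)).
  { apply rst_step, loop_edge_ext; [apply Hlooped; lia |].
    intros a; rewrite <- F0; f_equal; f_equal; apply In_V_ext; reflexivity. }
  apply rst_trans with (fun a => F (a, clamp n n)); [exact (walk_connected HW) |].
  apply rst_sym, rst_step, loop_edge_ext; [apply Hlooped; lia |].
  intros a; rewrite <- Fn; f_equal; f_equal; apply In_V_ext; symmetry; apply Nat.min_id.
Qed.

Lemma x_homotopy_iff_connected f g :
  looped g -> ((exists n F, x_homotopy X Y f g n F) <-> connected f g).
Proof.
  intros Hg; split.
  - intros (n & F & HF); exact (x_homotopy_connected HF).
  - intros Hfg; destruct (connected_walk Hfg Hg) as (n & H & HW & H0 & Hn).
    exists n, (fun p => H (proj1_sig (snd p)) (fst p)).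
    rewrite <- H0, <- Hn; apply walk_x_homotopy; exact HW.
Qed.

Definition selection (eta : V X -> V Y -> Prop) (h : V X -> V Y) : Prop :=
  forall v, eta v (h v).

Lemma selections_loop_edge eta h h' :
  is_multihom X Y eta -> selection eta h -> selection eta h' -> loop_edge h h'.
Proof.
  intros (_ & _ & Hcol & Hedge) Hh Hh'; repeat split.
  - intros a; apply Hcol, Hh.
  - intros a a' e; apply (Hedge a a' e); apply Hh.
  - intros a; apply Hcol, Hh'.
  - intros a a' e; apply (Hedge a a' e); apply Hh'.
  - intros a a' e; apply (Hedge a a' e); [apply Hh | apply Hh'].
Qed.

Definition select (eta : Hom_K2 X Y) : V X -> V Y :=
  fun v => proj1_sig (constructive_indefinite_description _
                        (proj1 (proj2 (proj2_sig eta)) v)).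

Lemma select_selection eta : selection (proj1_sig eta) (select eta).
Proof. intros v; unfold select; destruct constructive_indefinite_description; assumption. Qed.

Lemma Hom_le_loop_edge eta eta' : Hom_le X Y eta eta' -> loop_edge (select eta) (select eta').
Proof.
  intros Hle; apply (selections_loop_edge (proj2_sig eta')).
  - intros v; apply Hle, select_selection.
  - apply select_selection.
Qed.

Lemma singleton_multihom h : looped h -> is_multihom X Y (singleton_mh X Y h).
Proof.
  intros [Hcol Hadj]; unfold singleton_mh; repeat split.
  - intros v; exists (h v :: nil); intros y ->; left; reflexivity.
  - intros v; exists (h v); reflexivity.
  - intros v y ->; apply Hcol.
  - intros v w e y z -> ->; apply Hadj; exact e.
Qed.

Lemma pair_multihom h h' : loop_edge h h' -> is_multihom X Y (fun v y => y = h v \/ y = h' v).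
Proof.
  intros ([Hcol Hadj] & [Hcol' Hadj'] & Hhh'); repeat split.
  - intros v; exists (h v :: h' v :: nil); intros y [-> | ->]; simpl; auto.
  - intros v; exists (h v); left; reflexivity.
  - intros v y [-> | ->]; [apply Hcol | apply Hcol'].
  - intros v w e y z [-> | ->] [-> | ->].
    + apply Hadj; exact e.
    + apply Hhh'; exact e.
    + apply (adjacent_sym Hhh'); exact e.
    + apply Hadj'; exact e.
Qed.

Lemma loop_edge_Hom_connected h h' (ph : is_multihom X Y (singleton_mh X Y h))
    (ph' : is_multihom X Y (singleton_mh X Y h')) :
  loop_edge h h' -> Hom_connected X Y (exist _ _ ph) (exist _ _ ph').
Proof.
  intros Hhh'; apply rst_trans with (exist _ _ (pair_multihom Hhh')).
  - apply rst_step; intros v y Hy; left; exact Hy.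
  - apply rst_sym, rst_step; intros v y Hy; right; exact Hy.
Qed.

Lemma x_homotopic_iff_connected f g :
  looped f -> looped g -> (x_homotopic X Y f g <-> connected f g).
Proof.
  intros Hf Hg; split.
  - intros (pf & pg & Hfg).
    pose proof (clos_rst_map Hom_le_loop_edge Hfg) as Hsel.
    apply rst_trans with (select (exist _ _ pf)).
    { apply rst_step, (selections_loop_edge pf);
        [intros v; reflexivity | exact (select_selection (exist _ _ pf))]. }
    apply rst_trans with (select (exist _ _ pg)); [exact Hsel |].
    apply rst_sym, rst_step, (selections_loop_edge pg);
      [intros v; reflexivity | exact (select_selection (exist _ _ pg))].
  - intros Hfg; exists (singleton_multihom Hf), (singleton_multihom Hg).
    apply (clos_rst_lift (fun h hh => exist _ _ (singleton_multihom hh) : Hom_K2 X Y)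
             loop_edge_looped loop_edge_refl); [| exact Hfg].
    intros x y hx hy; apply loop_edge_Hom_connected.
Qed.

Definition refl_exp_vertex h (hh : looped h) : V (max_refl_subgraph (exp_graph X Y)) :=
  exist _ (exist _ h (proj1 hh)) (proj2 hh).

Lemma refl_component_iff_connected f g :
  looped f -> looped g ->
  ((exists p q : V (max_refl_subgraph (exp_graph X Y)),
      proj1_sig (proj1_sig p) = f /\ proj1_sig (proj1_sig q) = g /\
      same_component (max_refl_subgraph (exp_graph X Y)) p q) <-> connected f g).
Proof.
  intros Hf Hg; split.
  - intros (p & q & <- & <- & Hpq).
    refine (clos_rst_map (h := fun p => proj1_sig (proj1_sig p)) _ Hpq).
    intros [[h hc] hl] [[h' hc'] hl'] Hadj; repeat split; assumption.
  - intros Hfg; exists (refl_exp_vertex Hf), (refl_exp_vertex Hg); repeat split.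
    apply (clos_rst_lift refl_exp_vertex loop_edge_looped loop_edge_refl); [| exact Hfg].
    intros x y hx hy Hxy; apply rst_step, Hxy.
Qed.

End LoopedMaps.

Theorem proposition3p6 (X Y : bigraph) (f g : V X -> V Y)
  (hf : bigraph_hom X Y f) (hg : bigraph_hom X Y g) :
  (x_homotopic X Y f g <->
     exists (n : nat) (F : V X * In_V n -> V Y), x_homotopy X Y f g n F) /\
  ((exists (n : nat) (F : V X * In_V n -> V Y), x_homotopy X Y f g n F) <->
     exists p q : V (max_refl_subgraph (exp_graph X Y)),
       proj1_sig (proj1_sig p) = f /\ proj1_sig (proj1_sig q) = g /\
       same_component (max_refl_subgraph (exp_graph X Y)) p q).
Proof.
  apply looped_of_bigraph_hom in hf, hg.
  pose proof (x_homotopic_iff_connected hf hg).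
  pose proof (x_homotopy_iff_connected f hg).
  pose proof (refl_component_iff_connected hf hg).
  tauto.
Qed.
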